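(* Let $G$ be a finite group, $V$ an irreducible $\mathbb{F}G$-module, and $P<G$ a subgroup such that: (i) $\dim\mathrm{End}_P(V{\downarrow}_P)\geq2$; (ii) the module $W:=(1_P){\uparrow}^G$ is either a direct sum $1_G\oplus A$ or a uniserial module with composition factors $1_G,A,1_G$ (from top to bottom), where $A\not\cong1_G$. Then for any subgroup $H\leq G$, either $G=HP$ or $V{\downarrow}_H$ is reducible.
   Context: $\mathbb{F}$ is an algebraically closed field; $1_X$ denotes the trivial module of a group $X$. *)

From HB Require Import structures.
From mathcomp Require Import all_boot all_order all_algebra all_fingroup all_solvable all_field all_character.
Set Implicit Arguments. Unset Strict Implicit. Unset Printing Implicit Defensive.
Import GRing.Theory.
Local Open Scope ring_scope.

Section Defs.
Variable F : fieldType.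
Variable gT : finGroupType.

Section Triv.
Variable G : {group gT}.
Lemma triv_mx_repr : mx_repr G (fun _ : gT => (1%:M : 'M[F]_1)).
Proof. by split=> // x y _ _; rewrite mul1mx. Qed.
Definition triv_repr : mx_representation F G 1 := MxRepresentation triv_mx_repr.
End Triv.

(* The induced module (1_P)^G, realised as the permutation module on the
   right cosets P g (g in G), with G acting by right multiplication
   (row-vector convention: row i of ind1_mx x is the image of the basis
   vector of the i-th coset). *)
Section Ind.
Variables G P : {group gT}.
Local Notation m := #|rcosets P G|.

Definition ind1_mx (x : gT) : 'M[F]_m :=
  \matrix_(i < m, j < m)
     ((@enum_val _ (mem (rcosets P G)) j ==
       @enum_val _ (mem (rcosets P G)) i :* x)%g%:R).

Lemma ind1_mx_repr : mx_repr G ind1_mx.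
Proof.
split.
  apply/matrixP=> i j; rewrite !mxE rcoset1.
  by rewrite (inj_eq enum_val_inj) eq_sym.
move=> x y Gx Gy; apply/matrixP=> i k; rewrite !mxE.
have Hix : (enum_val i :* x)%g \in rcosets P G.
  have /rcosetsP[g Gg eig] := enum_valP i.
  by apply/rcosetsP; exists (g * x)%g; rewrite ?groupM // eig rcosetM.
rewrite (bigD1 (enum_rank_in Hix (enum_val i :* x)%g)) //= !mxE.
rewrite !enum_rankK_in // eqxx mul1r rcosetM big1 ?addr0 // => j nj.
rewrite !mxE; case: eqP => [ej|]; last by rewrite mul0r.
by case/eqP: nj; apply: enum_val_inj; rewrite enum_rankK_in // ej.
Qed.

Definition ind1_repr : mx_representation F G m := MxRepresentation ind1_mx_repr.
End Ind.

Definition uniserial (G : {group gT}) n (rG : mx_representation F G n) :=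
  forall U V : 'M[F]_n, mxmodule rG U -> mxmodule rG V ->
    (U <= V)%MS \/ (V <= U)%MS.

End Defs.

From HB Require Import structures.
From mathcomp Require Import all_boot all_order all_algebra all_fingroup all_solvable all_field all_character.
Set Implicit Arguments. Unset Strict Implicit. Unset Printing Implicit Defensive.
Import GRing.Theory.
Local Open Scope ring_scope.

(* Suppose V restricted to H is irreducible but G <> HP.  Take X in End_P(V)
   that is not scalar.  The map W = (1_P)^G -> End(V), Pg |-> g^-1 X g, is a
   G-module map, G acting on End(V) by conjugation.  By Schur's lemma for H,
   every H-fixed vector of W goes to a scalar, so it is G-fixed modulo the
   kernel K of this map.  The indicator of the cosets inside PH is such a
   vector and, as PH <> G, it is not G-fixed; with the given shape of W
   (1_G + A or 1_G | A | 1_G, A irreducible and nontrivial) this forces K to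
   contain the submodule U with W/U trivial.  Then all the g^-1 X g are equal
   to X, so X lies in End_G(V) and is scalar by Schur's lemma for G. *)

Section TrivialRepr.

Variables (F : fieldType) (gT : finGroupType) (G : {group gT}).

Lemma rsim_triv_repr n (r : mx_representation F G n) x :
  mx_rsim r (triv_repr F G) -> x \in G -> r x = 1%:M.
Proof.
case=> B _ freeB rB Gx; apply: (row_free_inj freeB).
by rewrite rB // mulmx1 mul1mx.
Qed.

Lemma irr_rfix_triv n (r : mx_representation F G n) (v : 'rV[F]_n) :
  mx_irreducible r -> (v <= rfix_mx r G)%MS -> v != 0 ->
  mx_rsim r (triv_repr F G).
Proof.
move=> irr /rfix_mxP fixv nzv.
have modv : mxmodule r <<v>>%MS.
  by rewrite (eqmx_module _ (genmxE v)); apply/mxmoduleP=> x Gx; rewrite fixv.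
have nzv' : <<v>>%MS != 0 by rewrite -mxrank_eq0 genmxE mxrank_eq0.
have [n_gt0 /(_ _ modv nzv')] := (mx_irrP r).1 irr.
rewrite /row_full genmxE -/(row_full v) => fullv.
have n1 : n = 1%N by apply/eqP; rewrite eqn_leq -{1}(eqP fullv) rank_leq_row.
exists v^T; first by rewrite n1.
  by rewrite /row_free mxrank_tr (eqP fullv).
move=> x Gx; have -> : r x = 1%:M by apply: (row_full_inj fullv); rewrite mulmx1 fixv.
by rewrite mul1mx /= mulmx1.
Qed.

Lemma rsim_nontriv_rfix0 n nA (r : mx_representation F G n)
    (rA : mx_representation F G nA) (v : 'rV[F]_n) :
  mx_rsim r rA -> mx_irreducible rA -> ~ mx_rsim rA (triv_repr F G) ->
  (v <= rfix_mx r G)%MS -> v = 0.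
Proof.
case=> B _ freeB rB irrA nontriv /rfix_mxP fixv; apply/eqP/negPn/negP => nzv.
apply: nontriv (irr_rfix_triv irrA (v := v *m B) _ _).
  by apply/rfix_mxP=> x Gx; rewrite -mulmxA -rB // mulmxA fixv.
by rewrite mulmx_free_eq0.
Qed.

Section NontrivialIrreducible.

Variables (n : nat) (r : mx_representation F G n).
Variables (nA : nat) (rA : mx_representation F G nA).
Hypotheses (irrA : mx_irreducible rA) (nontrivA : ~ mx_rsim rA (triv_repr F G)).

Lemma submod_rsim_nontriv_rfix0 U (modU : mxmodule r U) (y : 'rV[F]_n) :
  mx_rsim (submod_repr modU) rA -> (y <= U)%MS -> (y <= rfix_mx r G)%MS -> y = 0.
Proof.
move=> simU yU /rfix_mxP fixy.
have fixUy : (in_submod U y <= rfix_mx (submod_repr modU) G)%MS.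
  by apply/rfix_mxP=> x Gx; rewrite -in_submodJ // fixy.
by rewrite -(in_submodK yU) (rsim_nontriv_rfix0 simU irrA nontrivA fixUy) linear0.
Qed.

Lemma section_rsim_nontriv_fixed U V (modU : mxmodule r U) (modV : mxmodule r V)
    (y : 'rV[F]_n) :
  mx_rsim (section_repr modU modV) rA -> (y <= V)%MS ->
  (forall x, x \in G -> (y *m r x - y <= U)%MS) -> (y <= U)%MS.
Proof.
move=> simUV yV fixy; set S := <<in_factmod U V>>%MS.
have yS : (in_factmod U y <= S)%MS.
  by rewrite genmxE [in_factmod U y]in_factmodE [in_factmod U V]in_factmodE submxMr.
have fixSy : (in_submod S (in_factmod U y) <= rfix_mx (section_repr modU modV) G)%MS.
  apply/rfix_mxP=> x Gx.
  rewrite /= -(in_submodJ (section_module modU modV)) // -(in_factmodJ modU) //.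
  congr (in_submod S _); apply/eqP; rewrite -subr_eq0 -linearB /= in_factmod_eq0.
  exact: fixy.
rewrite -in_factmod_eq0 -(in_submodK yS).
by rewrite (rsim_nontriv_rfix0 simUV irrA nontrivA fixSy) linear0.
Qed.

End NontrivialIrreducible.

Lemma submod_triv_rfix n (r : mx_representation F G n) U (modU : mxmodule r U) :
  mx_rsim (submod_repr modU) (triv_repr F G) -> (U <= rfix_mx r G)%MS.
Proof.
move=> simU; apply/rfix_mxP=> x Gx.
rewrite -{1}(in_submodK (submx_refl U)) -(val_submodJ modU) //.
by rewrite (rsim_triv_repr simU Gx) mulmx1 in_submodK.
Qed.

Lemma section1_triv_sub n (r : mx_representation F G n) U (modU : mxmodule r U) x :
  mx_rsim (section_repr modU (mxmodule1 r)) (triv_repr F G) -> x \in G ->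
  (r x - 1%:M <= U)%MS.
Proof.
move=> simU Gx; have simF := mx_rsim_trans (mx_rsim_sym (mx_factmod_sub modU)) simU.
rewrite -in_factmod_eq0 linearB /= -{1}[r x]mul1mx (in_factmodJ modU) //.
by rewrite (rsim_triv_repr simF Gx) mulmx1 subrr.
Qed.

Lemma addsmx_rfix_sub n (r : mx_representation F G n) (U1 U2 : 'M[F]_n) x :
  mxmodule r U2 -> (U1 <= rfix_mx r G)%MS -> (U1 + U2 :=: 1%:M)%MS -> x \in G ->
  (r x - 1%:M <= U2)%MS.
Proof.
move=> modU2 /rfix_mxP fixU1 defW Gx.
have /sub_addsmxP[[u1 u2] /= def1] : (1%:M <= U1 + U2)%MS by rewrite defW.
have U1_0 : U1 *m (r x - 1%:M) = 0 by rewrite mulmxBr mulmx1 fixU1 ?subrr.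
rewrite -[r x - _]mul1mx {1}def1 mulmxDl -!(mulmxA _ _ (r x - 1%:M)) U1_0.
rewrite mulmx0 add0r (submx_trans (submxMl _ _)) // mulmxBr mulmx1.
by rewrite addmx_sub ?eqmx_opp ?(mxmoduleP modU2 x Gx).
Qed.

End TrivialRepr.

Lemma irr_cent_scalar (F : closedFieldType) (gT : finGroupType) (L : {group gT}) n
    (r : mx_representation F L n) (Y : 'M[F]_n) :
  mx_irreducible r -> (forall x, x \in L -> Y *m r x = r x *m Y) -> is_scalar_mx Y.
Proof.
move=> irr cYr; apply: (mx_abs_irr_cent_scalar (group_closure_closed_field irr)).
exact/centgmxP.
Qed.

Section CosetProducts.

Variable gT : finGroupType.

Lemma mem_mulg_mulr (A : {set gT}) (H : {group gT}) z h :
  h \in H -> (z * h \in A * H)%g = (z \in A * H)%g.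
Proof.
have AHr a b : b \in H -> (a \in A * H)%g -> (a * b \in A * H)%g.
  by move=> Hb /mulsgP[c d Ac Hd ->]; rewrite -mulgA mem_mulg ?groupM.
move=> Hh; apply/idP/idP; last exact: AHr.
by move/(AHr _ _ (groupVr Hh)); rewrite mulgK.
Qed.

Lemma rcoset_sub_mulg (P H : {group gT}) a : (P :* a \subset P * H)%g = (a \in P * H)%g.
Proof.
apply/idP/idP=> [/subsetP-> //|]; first exact: rcoset_refl.
case/mulsgP=> q h Pq Hh ->; apply/subsetP=> _ /rcosetP[p Pp ->].
by rewrite mulgA mem_mulg ?groupM.
Qed.

End CosetProducts.

Section InducedTrivial.

Variables (F : fieldType) (gT : finGroupType) (G P : {group gT}).
Local Notation m := #|rcosets P G|.
Local Notation rW := (ind1_repr F G P).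

Definition rcos (i : 'I_m) : {set gT} := @enum_val _ (mem (rcosets P G)) i.

Lemma rcos_inj : injective rcos.
Proof. exact: enum_val_inj. Qed.

Lemma rcosP i : exists2 a, a \in G & rcos i = (P :* a)%g.
Proof. by have /rcosetsP[a Ga Ea] := enum_valP i; exists a. Qed.

Lemma mem_repr_rcos i : repr (rcos i) \in rcos i.
Proof. by have [a _ ->] := rcosP i; apply: mem_repr_rcoset. Qed.

Lemma rcos_mulg i x : x \in G -> exists j, rcos j = (rcos i :* x)%g.
Proof.
move=> Gx; have Gix : (rcos i :* x)%g \in rcosets P G.
  have [a Ga ->] := rcosP i.
  by apply/rcosetsP; exists (a * x)%g; rewrite ?groupM // rcosetM.
by exists (enum_rank_in Gix (rcos i :* x)%g); rewrite /rcos enum_rankK_in.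
Qed.

Lemma rcosets_self : (P : {set gT}) \in rcosets P G.
Proof. by apply/rcosetsP; exists 1%g; rewrite ?group1 ?rcoset1. Qed.

Definition iP := enum_rank_in rcosets_self (P : {set gT}).

Lemma rcos_iP : rcos iP = P.
Proof. by rewrite /rcos /iP enum_rankK_in // rcosets_self. Qed.

Lemma row_ind1 x i j : rcos j = (rcos i :* x)%g -> row i (rW x) = delta_mx 0 j.
Proof.
move=> Ej; apply/rowP=> k; rewrite !mxE -Ej.
by rewrite (inj_eq rcos_inj) eqxx /= eq_sym.
Qed.

Lemma ind1_coord (w : 'rV[F]_m) x k j :
  x \in G -> rcos j = (rcos k :* x^-1)%g -> (w *m rW x) 0 k = w 0 j.
Proof.
move=> Gx Ej; rewrite !mxE (bigD1 j) //= big1 ?addr0 => [|i nij].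
  by rewrite mxE -/(rcos j) -/(rcos k) Ej -rcosetM mulVg rcoset1 eqxx mulr1.
rewrite mxE -/(rcos i) -/(rcos k); case: eqP => [Ei|]; last by rewrite mulr0.
by case/eqP: nij; apply: rcos_inj; rewrite Ej Ei -rcosetM mulgV rcoset1.
Qed.

Variable H : {group gT}.
Hypotheses (sPG : P \subset G) (sHG : H \subset G).

Definition PH_row : 'rV[F]_m := \row_i (rcos i \subset P * H)%g%:R.

Lemma PH_row_rfix : (PH_row <= rfix_mx rW H)%MS.
Proof.
apply/rfix_mxP=> h Hh; have Gh := subsetP sHG h Hh; apply/rowP=> k.
have [j Ej] := rcos_mulg k (groupVr Gh); have [a _ Ea] := rcosP k.
rewrite (ind1_coord _ Gh Ej) !mxE Ej Ea -rcosetM !rcoset_sub_mulg.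
by rewrite mem_mulg_mulr ?groupV.
Qed.

Lemma PH_row_notin_rfix : (H * P)%g != G :> {set gT} -> ~~ (PH_row <= rfix_mx rW G)%MS.
Proof.
move=> nHPG; have [g Gg nPHg] : exists2 g, g \in G & g \notin (P * H)%g.
  apply/exists_inP; apply: contraR nHPG => /exists_inPn PHG.
  rewrite eqEsubset mul_subG //=; apply/subsetP=> g Gg.
  have := PHG _ (groupVr Gg); rewrite negbK => /mulsgP[p h Pp Hh defg].
  by rewrite -[g]invgK defg invMg mem_mulg ?groupV.
have [j Ej] := rcos_mulg iP Gg; rewrite rcos_iP in Ej.
apply/rfix_mxP=> /(_ g Gg)/rowP/(_ j).
rewrite (ind1_coord _ Gg (j := iP)); last by rewrite Ej -rcosetM mulgV rcoset1 rcos_iP.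
rewrite !mxE Ej rcos_iP -{1}(rcoset1 P) !rcoset_sub_mulg (negbTE nPHg).
by rewrite -{1}[1%g]mulg1 mem_mulg // => /eqP; rewrite oner_eq0.
Qed.

End InducedTrivial.

Section ConjugationOrbit.

Variables (F : fieldType) (gT : finGroupType) (G P : {group gT}) (n : nat).
Variable rV : mx_representation F G n.
Hypothesis sPG : P \subset G.
Local Notation m := #|rcosets P G|.
Local Notation rW := (ind1_repr F G P).

Definition conj_mx x (Y : 'M[F]_n) := rV x^-1%g *m Y *m rV x.

Lemma conj_mxM x y Y :
  x \in G -> y \in G -> conj_mx (x * y)%g Y = conj_mx y (conj_mx x Y).
Proof. by move=> Gx Gy; rewrite /conj_mx invMg !repr_mxM ?groupV // !mulmxA. Qed.

Lemma conj_mx1 Y : conj_mx 1%g Y = Y.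
Proof. by rewrite /conj_mx invg1 repr_mx1 mul1mx mulmx1. Qed.

Lemma conj_mx_scalar x a : x \in G -> conj_mx x a%:M = a%:M.
Proof.
move=> Gx; rewrite /conj_mx scalar_mxC -mulmxA -repr_mxM ?groupV // mulVg.
by rewrite repr_mx1 mulmx1.
Qed.

Lemma conj_mx_fixed_cent x Y : x \in G -> conj_mx x Y = Y -> Y *m rV x = rV x *m Y.
Proof.
move=> Gx fixY; rewrite -[in RHS]fixY /conj_mx !mulmxA -repr_mxM ?groupV //.
by rewrite mulgV repr_mx1 mul1mx.
Qed.

Definition conj_lin x : 'M[F]_(n * n) := lin_mulmx (rV x^-1%g) *m lin_mulmxr (rV x).

Lemma mxvec_conj x Y : mxvec Y *m conj_lin x = mxvec (conj_mx x Y).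
Proof. by rewrite /conj_lin mulmxA !mul_vec_lin. Qed.

Variable X : 'M[F]_n.
Hypothesis cPX : forall p, p \in P -> X *m rV p = rV p *m X.

Lemma conj_mx_mulPg p g : p \in P -> g \in G -> conj_mx (p * g)%g X = conj_mx g X.
Proof.
move=> Pp Gg; have Gp := subsetP sPG p Pp.
rewrite conj_mxM //; congr conj_mx; rewrite /conj_mx -mulmxA cPX // mulmxA.
by rewrite -repr_mxM ?groupV // mulVg repr_mx1 mul1mx.
Qed.

Lemma conj_mx_rcos (i : 'I_m) g :
  g \in rcos i -> g \in G /\ conj_mx g X = conj_mx (repr (rcos i)) X.
Proof.
have [a Ga ->] := rcosP i => /rcosetP[p Pp ->].
have /rcosetP[q Pq ->] := mem_repr_rcoset P a.
by rewrite groupM ?(subsetP sPG p Pp) // !conj_mx_mulPg.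
Qed.

(* The G-map W -> End(V), Pg |-> g^-1 X g, with End(V) flattened by mxvec. *)
Definition orbit_mx : 'M[F]_(m, n * n) :=
  \matrix_(i < m) mxvec (conj_mx (repr (rcos i)) X).

Lemma orbit_mxJ x : x \in G -> rW x *m orbit_mx = orbit_mx *m conj_lin x.
Proof.
move=> Gx; apply/row_matrixP=> i; rewrite !row_mul.
have [j Ej] := rcos_mulg i Gx.
rewrite (row_ind1 F Ej) -rowE !rowK mxvec_conj.
have : (repr (rcos i) * x)%g \in rcos j by rewrite Ej mem_mulg ?set11 ?mem_repr_rcos.
case/conj_mx_rcos=> _ <-; have [Gr _] := conj_mx_rcos (mem_repr_rcos i).
by rewrite conj_mxM.
Qed.

Definition orbit_ker := kermx orbit_mx.

Lemma orbit_ker_module : mxmodule rW orbit_ker.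
Proof.
apply/mxmoduleP=> x Gx; rewrite sub_kermx -mulmxA orbit_mxJ // mulmxA.
by rewrite mulmx_ker mul0mx.
Qed.

Lemma sub_orbit_kerJ (w : 'rV[F]_m) x : x \in G ->
  (w *m rW x - w <= orbit_ker)%MS =
  (conj_mx x (vec_mx (w *m orbit_mx)) == vec_mx (w *m orbit_mx)).
Proof.
move=> Gx; rewrite sub_kermx mulmxBl subr_eq0 -mulmxA orbit_mxJ // mulmxA.
by rewrite -{1}[w *m orbit_mx]vec_mxK mxvec_conj (can2_eq mxvecK vec_mxK).
Qed.

Lemma orbit_mx_iP : vec_mx (delta_mx 0 (iP G P) *m orbit_mx) = X.
Proof.
rewrite -rowE rowK mxvecK.
have := @conj_mx_rcos (iP G P) 1%g; rewrite rcos_iP group1 => /(_ isT) [_ <-].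
exact: conj_mx1.
Qed.

End ConjugationOrbit.

Section ClosedField.

Variables (F : closedFieldType) (gT : finGroupType) (G P H : {group gT}) (n : nat).
Variable rV : mx_representation F G n.
Hypotheses (sPG : P \subset G) (sHG : H \subset G).
Variable X : 'M[F]_n.
Hypothesis cPX : forall p, p \in P -> X *m rV p = rV p *m X.
Local Notation m := #|rcosets P G|.
Local Notation rW := (ind1_repr F G P).
Local Notation K := (orbit_ker P rV X).
Local Notation PH := (PH_row F G P H).

Lemma cotriv_orbit_ker_scalar : mx_irreducible rV ->
  (forall x, x \in G -> (rW x - 1%:M <= K)%MS) -> is_scalar_mx X.
Proof.
move=> irrV cotriv; apply: (irr_cent_scalar irrV) => x Gx.
apply: conj_mx_fixed_cent => //; pose e : 'rV[F]_m := delta_mx 0 (iP G P).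
have: (e *m rW x - e <= K)%MS.
  by rewrite -[e in _ - e]mulmx1 -mulmxBr (submx_trans (submxMl _ _) (cotriv x Gx)).
by rewrite sub_orbit_kerJ // orbit_mx_iP // => /eqP.
Qed.

Hypothesis irrH : mx_irreducible (subg_repr rV sHG).

(* Schur's lemma for V restricted to H: an H-fixed w maps into End_H(V). *)
Lemma rfix_sub_orbit_kerJ (w : 'rV[F]_m) x :
  (w <= rfix_mx rW H)%MS -> x \in G -> (w *m rW x - w <= K)%MS.
Proof.
move=> /rfix_mxP fixw Gx; rewrite sub_orbit_kerJ //.
have /is_scalar_mxP[a ->] : is_scalar_mx (vec_mx (w *m orbit_mx P rV X)).
  apply: (irr_cent_scalar irrH) => h Hh; have Gh := subsetP sHG h Hh.
  apply: (conj_mx_fixed_cent (rV := rV) Gh); apply/eqP.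
  by rewrite -sub_orbit_kerJ // fixw // subrr sub0mx.
by rewrite conj_mx_scalar.
Qed.
Section ShapeOfInduced.

Variables (nA : nat) (rA : mx_representation F G nA).
Hypotheses (irrA : mx_irreducible rA) (nontrivA : ~ mx_rsim rA (triv_repr F G)).
Hypothesis nHPG : (H * P)%g != G :> {set gT}.

Lemma direct_sum_sub_orbit_ker (U1 U2 : 'M[F]_m)
    (modU1 : mxmodule rW U1) (modU2 : mxmodule rW U2) :
  (U1 + U2 :=: 1%:M)%MS -> mx_rsim (submod_repr modU1) (triv_repr F G) ->
  mx_rsim (submod_repr modU2) rA -> (U2 <= K)%MS.
Proof.
move=> defW simU1 simU2.
have U1fix := submod_triv_rfix simU1.
have [_ _ minU2] : mxsimple rW U2.
  exact/(submod_mx_irr modU2)/(mx_rsim_irr (mx_rsim_sym simU2)).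
have [KU2_0 | nzKU2] := eqVneq (K :&: U2)%MS 0; last first.
  have modKU2 := capmx_module (orbit_ker_module sPG cPX) modU2.
  exact: submx_trans (minU2 _ modKU2 (capmxSr _ _) nzKU2) (capmxSl _ _).
have /sub_addsmxP[[u1 u2] /= defPH] : (PH <= U1 + U2)%MS by rewrite defW submx1.
have /rfix_mxP fixu1 := submx_trans (submxMl u1 U1) U1fix.
have u2U2 : (u2 *m U2 <= U2)%MS := submxMl _ _.
have u2_0 : u2 *m U2 = 0.
  apply: (submod_rsim_nontriv_rfix0 irrA nontrivA simU2 u2U2).
  apply/rfix_mxP=> x Gx; apply/eqP; rewrite -subr_eq0 -submx0 -KU2_0 sub_capmx.
  apply/andP; split; last first.
    have u2xU2 := submx_trans (submxMr (rW x) u2U2) (mxmoduleP modU2 x Gx).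
    by rewrite addmx_sub ?eqmx_opp.
  have -> : u2 *m U2 = PH - u1 *m U1 by rewrite defPH addrC addKr.
  rewrite mulmxBl fixu1 // opprB addrA subrK.
  exact: rfix_sub_orbit_kerJ (PH_row_rfix F P sHG) Gx.
case/negP: (PH_row_notin_rfix F sPG sHG nHPG).
by rewrite defPH u2_0 addr0 (submx_trans (submxMl _ _) U1fix).
Qed.

Lemma uniserial_sub_orbit_ker (U1 U2 : 'M[F]_m)
    (modU1 : mxmodule rW U1) (modU2 : mxmodule rW U2) :
  uniserial rW -> (U1 <= U2)%MS -> mx_rsim (submod_repr modU1) (triv_repr F G) ->
  mx_rsim (section_repr modU1 modU2) rA -> (U2 <= K)%MS.
Proof.
move=> uniW sU12 simU1 simU12.
have [ltU12 maxU12] : max_submod rW U1 U2.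
  exact/(max_submodP modU1 modU2 sU12)/(mx_rsim_irr (mx_rsim_sym simU12)).
have nPHU1 : ~~ (PH <= U1)%MS.
  apply: contra (PH_row_notin_rfix F sPG sHG nHPG) => /submx_trans; apply.
  exact: submod_triv_rfix simU1.
apply/negPn/negP=> nU2K.
have sKU2 : (K <= U2)%MS.
  by case: (uniW _ _ (orbit_ker_module sPG cPX) modU2) => // sU2K; rewrite sU2K in nU2K.
have sKU1 : (K <= U1)%MS.
  case: (uniW _ _ (orbit_ker_module sPG cPX) modU1) => // sU1K; apply/negPn/negP=> nKU1.
  by apply: (maxU12 K); split; rewrite ?(orbit_ker_module sPG cPX) // ltmxE ?sU1K ?sKU2.
have PHJ x : x \in G -> (PH *m rW x - PH <= U1)%MS.
  move=> Gx; apply: submx_trans sKU1.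
  exact: rfix_sub_orbit_kerJ (PH_row_rfix F P sHG) Gx.
have PHU2 : (PH <= U2)%MS.
  pose N := (U1 + PH)%MS.
  have modN : mxmodule rW N.
    apply/mxmoduleP=> x Gx; rewrite addsmxMr addsmx_sub.
    rewrite (submx_trans (mxmoduleP modU1 x Gx)) ?addsmxSl //=.
    by rewrite -[PH *m _](subrK PH) addmx_sub_adds ?PHJ.
  apply: submx_trans (addsmxSr U1 _) _; case: (uniW _ _ modN modU2) => // sU2N.
  rewrite -(mxrank_leqif_sup sU2N).2 eqn_leq mxrankS //=.
  have rankN := (mxrank_adds_leqif U1 PH).1; have rankPH := rank_leq_row PH.
  have rankU12 : (\rank U1 < \rank U2)%N by move: ltU12; rewrite ltmxErank => /andP[].
  apply: leq_trans rankN (leq_trans _ rankU12).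
  by rewrite -[(\rank U1).+1]addn1 leq_add2l.
case/negP: nPHU1.
exact: (section_rsim_nontriv_fixed irrA nontrivA simU12 PHU2 PHJ).
Qed.

End ShapeOfInduced.

End ClosedField.

Theorem lemma3p1 (F : closedFieldType) (gT : finGroupType) (G P : {group gT})
    (n : nat) (rV : mx_representation F G n)
    (irrV : mx_irreducible rV)
    (ltPG : P \proper G)
    (hEnd : (2 <= \rank 'C(enveloping_algebra_mx
                              (subg_repr rV (proper_sub ltPG)))%MS)%N)
    (hW : let rW := ind1_repr F G P in
          exists nA (rA : mx_representation F G nA),
            [/\ mx_irreducible rA, ~ mx_rsim rA (triv_repr F G) &
              (* W = 1_G (+) A *)
              (exists U1 U2 (modU1 : mxmodule rW U1) (modU2 : mxmodule rW U2),
                 [/\ mxdirect (U1 + U2), (U1 + U2 :=: 1%:M)%MS,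
                     mx_rsim (submod_repr modU1) (triv_repr F G) &
                     mx_rsim (submod_repr modU2) rA])
              \/
              (* W uniserial with composition factors 1_G, A, 1_G (top to bottom) *)
              (uniserial rW /\
               exists U1 U2 (modU1 : mxmodule rW U1) (modU2 : mxmodule rW U2),
                 [/\ (U1 <= U2)%MS,
                     mx_rsim (submod_repr modU1) (triv_repr F G),
                     mx_rsim (section_repr modU1 modU2) rA &
                     mx_rsim (section_repr modU2 (mxmodule1 rW)) (triv_repr F G)])]) :
  forall (H : {group gT}) (sHG : H \subset G),
    (H * P)%g = G :> {set gT} \/ ~ mx_irreducible (subg_repr rV sHG).
Proof.
move=> H sHG; have [-> | nHPG] := eqVneq (H * P)%g (G : {set gT}); first by left.
right=> irrH; have sPG := proper_sub ltPG.
have /(has_non_scalar_mxP (scalar_mx_cent _ _))[X cPX nscalX] := hEnd.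
rewrite memmx_cent_envelop in cPX; have {}cPX := centgmxP cPX.
case/negP: nscalX; apply: (cotriv_orbit_ker_scalar sPG cPX irrV) => x Gx.
have [nA [rA [irrA nontrivA [[U1 [U2 [modU1 [modU2 [_ defW simU1 simU2]]]]] |
  [uniW [U1 [U2 [modU1 [modU2 [sU12 simU1 simU12 simU2W]]]]]]]]]] := hW.
  apply: submx_trans (addsmx_rfix_sub modU2 (submod_triv_rfix simU1) defW Gx) _.
  exact: (direct_sum_sub_orbit_ker sPG cPX irrH irrA nontrivA nHPG defW simU1 simU2).
apply: submx_trans (section1_triv_sub simU2W Gx) _.
exact: (uniserial_sub_orbit_ker sPG cPX irrH irrA nontrivA nHPG uniW sU12 simU1 simU12).
Qed.
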